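(* Let $\mathbb{F}\in\{\mathbb{R},\mathbb{C}\}$, $N\ge2$, and let $\mathcal{P}(M,N)$ be the set of Parseval frames for $\mathbb{F}^N$ with $M$ vectors. Suppose an equiangular Parseval frame exists in $\mathcal{P}(M,N)$. Then $\Phi\in\mathcal{P}(M,N)$ maximizes $V_2$ over $\mathcal{P}(M,N)$ if and only if $\Phi$ is an equiangular Parseval frame.
   Context: A Parseval frame for $\mathbb{F}^N$ is a family $\{\varphi_i\}_{i=1}^M\subseteq\mathbb{F}^N$ whose $N\times M$ matrix $\Phi$ (columns $\varphi_i$) satisfies $\Phi\Phi^*=I$; it is equiangular if all $\|\varphi_i\|$ are equal and all $|\langle\varphi_i,\varphi_j\rangle|$, $i\neq j$, are equal. For $K\subseteq[M]$, $\Phi_K$ is the submatrix of columns indexed by $K$; $v_k(F)=\sqrt{\det(F^*F)}$; and $V_k(\Phi)=\sum_{|K|=k}v_k(\Phi_K)$. *)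

From HB Require Import structures.
From mathcomp Require Import all_boot all_order all_algebra.
From mathcomp Require Import reals complex.
Set Implicit Arguments. Unset Strict Implicit. Unset Printing Implicit Defensive.
Import Order.TTheory GRing.Theory Num.Theory.
Local Open Scope ring_scope.

Section Generic.
Variable F : numFieldType.
Variable adj : forall m n, 'M[F]_(m, n) -> 'M[F]_(n, m).
Variable sq : F -> F.

(* Parseval frame of M vectors for F^N: columns of Phi, Phi Phi^* = I *)
Definition gparseval (N M : nat) (Phi : 'M[F]_(N, M)) : Prop :=
  Phi *m adj Phi = 1%:M.

Definition ginner (N M : nat) (Phi : 'M[F]_(N, M)) (i j : 'I_M) : F :=
  (adj (col j Phi) *m col i Phi) 0 0.

Definition gnorm (N M : nat) (Phi : 'M[F]_(N, M)) (i : 'I_M) : F :=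
  sq (ginner Phi i i).

Definition gequiangular (N M : nat) (Phi : 'M[F]_(N, M)) : Prop :=
  (forall i j : 'I_M, gnorm Phi i = gnorm Phi j) /\
  (forall i j k l : 'I_M, i != j -> k != l ->
      `|ginner Phi i j| = `|ginner Phi k l|).

(* Phi_K : submatrix of the columns indexed by K (in increasing order) *)
Definition subcols (N M : nat) (Phi : 'M[F]_(N, M)) (K : {set 'I_M})
  : 'M[F]_(N, #|K|) :=
  \matrix_(i < N, j < #|K|) Phi i (enum_val j).

Definition gvol (N k : nat) (G : 'M[F]_(N, k)) : F :=
  sq (\det (adj G *m G)).

Definition gV (k N M : nat) (Phi : 'M[F]_(N, M)) : F :=
  \sum_(K : {set 'I_M} | #|K| == k) gvol (subcols Phi K).
End Generic.

Definition radj (R : realType) m n (A : 'M[R]_(m, n)) : 'M[R]_(n, m) := A^T.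
Definition rsqrt (R : realType) (x : R) : R := Num.sqrt x.

Definition cadj (R : realType) m n (A : 'M[R[i]]_(m, n)) : 'M[R[i]]_(n, m) :=
  (map_mx Num.conj A)^T.
Definition csqrt (R : realType) (x : R[i]) : R[i] := sqrtC x.

Definition cor11_stmt (F : numFieldType)
  (adj : forall m n, 'M[F]_(m, n) -> 'M[F]_(n, m)) (sq : F -> F)
  (M N : nat) : Prop :=
  (exists Psi : 'M[F]_(N, M), gparseval adj Psi /\ gequiangular adj sq Psi) ->
  forall Phi : 'M[F]_(N, M), gparseval adj Phi ->
    ((forall Psi : 'M[F]_(N, M), gparseval adj Psi ->
        gV adj sq 2 Psi <= gV adj sq 2 Phi)
     <-> gequiangular adj sq Phi).

From Pilot Require Import Defs.
From mathcomp Require Import all_boot all_order all_algebra.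
From mathcomp Require Import reals complex.
From mathcomp Require Import ring.
Set Implicit Arguments. Unset Strict Implicit. Unset Printing Implicit Defensive.
Import Order.TTheory GRing.Theory Num.Theory.
Local Open Scope ring_scope.

(* For a Parseval frame the Gram matrix G = Phi^* Phi is a projection of trace
   N, so every row satisfies sum_(j != i) (G_ii G_jj - |G_ij|^2) = G_ii (N - 1);
   summing over i, the squared 2-volumes det (Phi_K^* Phi_K) of all pairs K add
   up to N (N - 1) / 2 whatever the frame.  By Cauchy-Schwarz,
   V_2(Phi)^2 <= 'C(M, 2) N (N - 1) / 2, with equality exactly when all pair
   volumes agree.  Equal pair volumes force equal norms (through the row
   identity, as N >= 2) and then equal |<phi_i, phi_j>|, and conversely.  An
   equiangular Parseval frame attains the bound, so the maximizers of V_2 are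
   exactly the equiangular Parseval frames. *)

Lemma det_mx2 (R : comPzRingType) n (A : 'M[R]_n) (p q : 'I_n) :
  n = 2%N -> p != q -> \det A = A p p * A q q - A p q * A q p.
Proof.
move=> n2; subst n => pq.
have -> : \det A = A 0 0 * A 1 1 - A 0 1 * A 1 0.
  rewrite (expand_det_row _ 0) !big_ord_recl big_ord0 addr0 /cofactor.
  rewrite !det_mx11 !mxE /= expr0 expr1 !mul1r mulN1r mulrN.
  by congr (_ * A _ _ - _ * A _ _); try congr (A _ _); apply: val_inj.
case: p q pq => [[|[|p]] hp] // [[|[|q]] hq] //= _.
- have -> : Ordinal hp = 0 by apply: val_inj.
  by have -> : Ordinal hq = 1 by apply: val_inj.
- have -> : Ordinal hp = 1 by apply: val_inj.
  have -> : Ordinal hq = 0 by apply: val_inj.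
  ring.
Qed.

Lemma big_card2_mem (R : Type) (idx : R) (op : Monoid.com_law idx)
    (T : finType) (i : T) (f : {set T} -> R) :
  \big[op/idx]_(K : {set T} | (#|K| == 2%N) && (i \in K)) f K =
  \big[op/idx]_(j | j != i) f [set i; j].
Proof.
pose other (K : {set T}) := odflt i [pick j in K :\ i].
have otherE j : j != i -> other [set i; j] = j.
  move=> ji; rewrite /other setU1K ?in_set1 1?eq_sym //.
  by case: pickP => [y /set1P //|/(_ j)]; rewrite in_set1 eqxx.
rewrite (reindex_onto (fun j => [set i; j]) other) => [|K /andP[K2 iK]].
  apply: eq_bigl => j; case: (eqVneq j i) => [->|ji].
    by rewrite setUid cards1.
  by rewrite cards2 (eq_sym i j) ji set21 otherE ?eqxx.
have /cards1P[j Kj] : #|K :\ i| == 1%N.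
  by move: K2; rewrite (cardsD1 i) iK add1n eqSS.
rewrite /other Kj; case: pickP => [y /set1P ->|/(_ j)]; last by rewrite in_set1 eqxx.
by rewrite -Kj setD1K.
Qed.

(* Lagrange's identity: Cauchy-Schwarz together with its defect. *)
Lemma double_sum_sqrB (R : comPzRingType) (I : finType) (A : pred I)
    (f : I -> R) :
  \sum_(k | A k) \sum_(l | A l) (f k - f l) ^+ 2 + (\sum_(k | A k) f k) ^+ 2 *+ 2
  = (\sum_(k | A k) f k ^+ 2) *+ (#|A| * 2).
Proof.
set S1 := \sum_(k | A k) f k; set S2 := \sum_(k | A k) f k ^+ 2.
have inner k : \sum_(l | A l) (f k - f l) ^+ 2 = f k ^+ 2 *+ #|A| - (f k * S1) *+ 2 + S2.
  under eq_bigr do rewrite sqrrB.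
  by rewrite big_split /= sumrB sumr_const sumrMnl mulr_sumr.
under eq_bigr do rewrite inner.
rewrite big_split /= sumrB !sumrMnl -mulr_suml sumr_const -/S1 -/S2.
by rewrite mulnC mulrnA expr2; ring.
Qed.

Lemma double_sum_sqrB_ge0 (R : numDomainType) (I : finType) (A : pred I)
    (f : I -> R) : (forall k, A k -> f k \is Num.real) ->
  0 <= \sum_(k | A k) \sum_(l | A l) (f k - f l) ^+ 2.
Proof.
move=> fR; do 2![apply: sumr_ge0 => ? ?].
by rewrite -realEsqr rpredB ?fR.
Qed.

Lemma double_sum_sqrB_eq0 (R : numDomainType) (I : finType) (A : pred I)
    (f : I -> R) : (forall k, A k -> f k \is Num.real) ->
  \sum_(k | A k) \sum_(l | A l) (f k - f l) ^+ 2 = 0 <->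
  (forall k l, A k -> A l -> f k = f l).
Proof.
move=> fR; have sqr_ge0 k l : A k -> A l -> 0 <= (f k - f l) ^+ 2.
  by move=> Ak Al; rewrite -realEsqr rpredB ?fR.
split=> [D0 k l Ak Al|fconst]; last first.
  by apply: big1 => k Ak; apply: big1 => l Al; rewrite (fconst k l) // subrr expr0n.
have row_ge0 k' : A k' -> 0 <= \sum_(l' | A l') (f k' - f l') ^+ 2.
  by move=> Ak'; apply: sumr_ge0 => l' /(sqr_ge0 _ _ Ak').
have /eqP := psumr_eq0P (sqr_ge0 k ^~ Ak) (psumr_eq0P row_ge0 D0 Ak) Al.
by rewrite sqrf_eq0 subr_eq0 => /eqP.
Qed.

Section ParsevalGram.
Variable F : numFieldType.
Variable conjF : {rmorphism F -> F}.
Hypothesis conjFK : involutive conjF.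
Hypothesis sqr_normF : forall x : F, `|x| ^+ 2 = x * conjF x.
Variable adj : forall m n, 'M[F]_(m, n) -> 'M[F]_(n, m).
Arguments adj [m n].
Hypothesis adjE : forall m n (A : 'M[F]_(m, n)), adj A = (map_mx conjF A)^T.

Definition gram m n (A : 'M[F]_(m, n)) : 'M[F]_n := adj A *m A.

Definition gram_minor m n (A : 'M[F]_(m, n)) (i j : 'I_n) : F :=
  gram A i i * gram A j j - gram A i j * gram A j i.

Section Gram.
Variables m n : nat.
Implicit Types (A : 'M[F]_(m, n)) (i j : 'I_n).

Lemma gramE A i j : gram A i j = \sum_k conjF (A k i) * A k j.
Proof. by rewrite /gram adjE !mxE; apply: eq_bigr => k _; rewrite !mxE. Qed.

Lemma ginner_gram A i j : ginner adj A i j = gram A j i.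
Proof. by rewrite /ginner gramE adjE !mxE; apply: eq_bigr => k _; rewrite !mxE. Qed.

Lemma gram_conj A i j : conjF (gram A i j) = gram A j i.
Proof.
rewrite !gramE rmorph_sum; apply: eq_bigr => k _.
by rewrite rmorphM conjFK mulrC.
Qed.

Lemma norm_gramK A i j : `|gram A i j| ^+ 2 = gram A i j * gram A j i.
Proof. by rewrite sqr_normF gram_conj. Qed.

Lemma gram_minorE A i j :
  gram_minor A i j = gram A i i * gram A j j - `|gram A j i| ^+ 2.
Proof. by rewrite norm_gramK [gram A j i * _]mulrC. Qed.

Lemma conjM_ge0 (x : F) : 0 <= conjF x * x.
Proof. by rewrite mulrC -sqr_normF exprn_ge0. Qed.

Lemma gram_diag_ge0 A i : 0 <= gram A i i.
Proof. by rewrite gramE; apply: sumr_ge0 => k _; apply: conjM_ge0. Qed.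

Lemma gram_minor_lagrange A i j :
  let w k l := A k i * A l j - A l i * A k j in
  gram_minor A i j *+ 2 = \sum_k \sum_l conjF (w k l) * w k l.
Proof.
move=> w; pose u k : F := A k i; pose v k : F := A k j.
have wE k l : conjF (w k l) * w k l =
    (conjF (u k) * u k) * (conjF (v l) * v l) + (conjF (u l) * u l) * (conjF (v k) * v k)
    - (conjF (u k) * v k) * (conjF (v l) * u l) - (conjF (v k) * u k) * (conjF (u l) * v l).
  by rewrite /w /u /v rmorphB !rmorphM; ring.
under eq_bigr do under eq_bigr do rewrite wE.
under eq_bigr do rewrite !sumrB big_split /=.
rewrite !sumrB big_split /= /gram_minor !gramE !big_distrlr /=.
rewrite [X in _ = _ + X - _ - _]exchange_big [X in _ = _ - _ - X]exchange_big /=.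
under [X in _ = _ - _ - X]eq_bigr do under eq_bigr do rewrite mulrC.
by rewrite mulr2n; ring.
Qed.

Lemma gram_minor_ge0 A i j : 0 <= gram_minor A i j.
Proof.
rewrite -(pmulrn_lge0 _ (isT : (0 < 2)%N)) gram_minor_lagrange.
by do 2![apply: sumr_ge0 => ? _]; apply: conjM_ge0.
Qed.

End Gram.

Variables N M : nat.
Implicit Types (Phi Psi : 'M[F]_(N, M)) (K L : {set 'I_M}).

Lemma gram_idem Phi : gparseval adj Phi -> gram Phi *m gram Phi = gram Phi.
Proof. by move=> hP; rewrite /gram mulmxA -(mulmxA _ Phi) hP mulmx1. Qed.

Lemma gram_row_sqr Phi i : gparseval adj Phi ->
  \sum_j gram Phi i j * gram Phi j i = gram Phi i i.
Proof. by move=> hP; rewrite -[in RHS](gram_idem hP) mxE. Qed.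

Lemma gram_trace Phi : gparseval adj Phi -> \sum_i gram Phi i i = N%:R.
Proof. by move=> hP; have := mxtrace_mulC (adj Phi) Phi; rewrite hP mxtrace1. Qed.

Lemma sum_gram_minor_row Phi i : gparseval adj Phi ->
  \sum_(j | j != i) gram_minor Phi i j = gram Phi i i * (N%:R - 1).
Proof.
move=> hP.
have tr := gram_trace hP; rewrite (bigD1 i) //= in tr.
have row := gram_row_sqr i hP; rewrite (bigD1 i) //= in row.
rewrite /gram_minor sumrB -mulr_sumr (canRL (addKr _) tr) (canRL (addKr _) row).
ring.
Qed.

Lemma gram_subcols Phi K p q :
  gram (subcols Phi K) p q = gram Phi (enum_val p) (enum_val q).
Proof. by rewrite !gramE; apply: eq_bigr => k _; rewrite !mxE. Qed.

Lemma det_gram_pair Phi i j :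
  i != j -> \det (gram (subcols Phi [set i; j])) = gram_minor Phi i j.
Proof.
move=> ij; have K2 : #|[set i; j]| = 2%N by rewrite cards2 ij.
have h0 : (0 < #|[set i; j]|)%N by rewrite K2.
have h1 : (1 < #|[set i; j]|)%N by rewrite K2.
rewrite (@det_mx2 _ _ _ (Ordinal h0) (Ordinal h1)) // !gram_subcols.
have : enum_val (Ordinal h0) != enum_val (Ordinal h1).
  by apply/eqP => /enum_val_inj.
have := enum_valP (Ordinal h0); have := enum_valP (Ordinal h1).
move: (enum_val _) (enum_val _) => b a.
rewrite !in_set2 => /orP[]/eqP-> /orP[]/eqP->; rewrite ?eqxx // => _.
by rewrite /gram_minor; ring.
Qed.

Lemma det_gram_card2_ge0 Phi K :
  #|K| == 2%N -> 0 <= \det (gram (subcols Phi K)).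
Proof. by case/cards2P => i [j [ij ->]]; rewrite det_gram_pair // gram_minor_ge0. Qed.

Lemma sum_det_gram_card2 Phi : gparseval adj Phi ->
  (\sum_(K : {set 'I_M} | #|K| == 2%N) \det (gram (subcols Phi K))) *+ 2 =
  N%:R * (N%:R - 1).
Proof.
move=> hP; rewrite -sumrMnl.
transitivity (\sum_(K : {set 'I_M} | #|K| == 2%N)
                 \sum_(i in K) \det (gram (subcols Phi K))).
  by apply: eq_bigr => K /eqP K2; rewrite sumr_const -K2.
under eq_bigr do rewrite big_mkcond /=.
rewrite exchange_big -{1}(gram_trace hP) mulr_suml; apply: eq_bigr => i _.
rewrite -big_mkcondr big_card2_mem -sum_gram_minor_row //.
by apply: eq_bigr => j ji; rewrite det_gram_pair // eq_sym.
Qed.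

Definition equal_pair_minors Phi := forall i j k l : 'I_M,
  i != j -> k != l -> gram_minor Phi i j = gram_minor Phi k l.

Lemma equal_pair_minors_diag Phi : (2 <= N)%N -> gparseval adj Phi ->
  equal_pair_minors Phi -> forall i j, gram Phi i i = gram Phi j j.
Proof.
move=> N2 hP hX i j; case: (eqVneq i j) => [-> //|ij].
have N1_neq0 : (N%:R - 1 : F) != 0 by rewrite subr_eq0 pnatr_eq1 gtn_eqF.
have row_const x :
    \sum_(k | k != x) gram_minor Phi x k = gram_minor Phi i j *+ M.-1.
  rewrite -[M in M.-1]card_ord -(cardC1 x) -sumr_const.
  by apply: eq_bigr => k kx; apply: hX; rewrite // eq_sym.
by apply: (mulIf N1_neq0); rewrite -!sum_gram_minor_row // !row_const.
Qed.

Variable sq : F -> F.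
Hypothesis sq_ge0 : forall x, 0 <= x -> 0 <= sq x.
Hypothesis sqK : forall x, 0 <= x -> sq x ^+ 2 = x.

Lemma equal_norms_gram Phi :
  (forall i j, Defs.gnorm adj sq Phi i = Defs.gnorm adj sq Phi j) <->
  (forall i j, gram Phi i i = gram Phi j j).
Proof.
rewrite /Defs.gnorm; split=> hn i j; last by rewrite !ginner_gram (hn i j).
have := hn i j; rewrite !ginner_gram => sq_eq.
by rewrite -(sqK (gram_diag_ge0 Phi i)) sq_eq sqK // gram_diag_ge0.
Qed.

Lemma equiangular_equal_pair_minors Phi :
  gequiangular adj sq Phi -> equal_pair_minors Phi.
Proof.
case=> /equal_norms_gram hn hi i j k l ij kl.
rewrite !gram_minorE -[gram Phi j i]ginner_gram -[gram Phi l k]ginner_gram.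
by rewrite (hi i j k l) // (hn i k) (hn j k) (hn l k).
Qed.

Lemma equal_pair_minors_equiangular Phi : (2 <= N)%N -> gparseval adj Phi ->
  equal_pair_minors Phi -> gequiangular adj sq Phi.
Proof.
move=> N2 hP hX; have hn := equal_pair_minors_diag N2 hP hX.
split=> [|i j k l ij kl]; first exact/equal_norms_gram.
apply/eqP; rewrite -(eqrXn2 (n := 2)) ?normr_ge0 // !ginner_gram; apply/eqP.
have normE a b : `|gram Phi b a| ^+ 2 = gram Phi a a * gram Phi b b - gram_minor Phi a b.
  by rewrite gram_minorE opprB addrC subrK.
by rewrite !normE (hX i j k l ij kl) (hn i k) (hn j k) (hn l k).
Qed.

Local Notation vol Phi K := (gvol adj sq (subcols Phi K)).

Lemma vol_card2_ge0 Phi K : #|K| == 2%N -> 0 <= vol Phi K.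
Proof. by move=> K2; apply/sq_ge0/det_gram_card2_ge0. Qed.

Lemma vol_card2K Phi K : #|K| == 2%N -> vol Phi K ^+ 2 = \det (gram (subcols Phi K)).
Proof. by move=> K2; apply/sqK/det_gram_card2_ge0. Qed.

Lemma gV2_ge0 Phi : 0 <= gV adj sq 2 Phi.
Proof. by apply: sumr_ge0 => K; apply: vol_card2_ge0. Qed.

Lemma gV2_identity Phi : gparseval adj Phi ->
  \sum_(K : {set 'I_M} | #|K| == 2%N) \sum_(L : {set 'I_M} | #|L| == 2%N)
      (vol Phi K - vol Phi L) ^+ 2 + gV adj sq 2 Phi ^+ 2 *+ 2 =
  N%:R * (N%:R - 1) *+ 'C(M, 2).
Proof.
move=> hP; rewrite double_sum_sqrB.
under eq_bigr => K K2 do rewrite vol_card2K //.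
rewrite mulnC mulrnA sum_det_gram_card2 //; congr (_ *+ _).
by rewrite -[M in 'C(M, 2)]card_ord -card_draws; apply: eq_card => K; rewrite inE.
Qed.

Lemma vol_card2_real Phi K : #|K| == 2%N -> vol Phi K \is Num.real.
Proof. by move/(vol_card2_ge0 Phi)/ger0_real. Qed.

Lemma gV2_le Phi : gparseval adj Phi ->
  gV adj sq 2 Phi ^+ 2 *+ 2 <= N%:R * (N%:R - 1) *+ 'C(M, 2).
Proof.
move=> hP; rewrite -(gV2_identity hP) lerDr.
by apply: double_sum_sqrB_ge0 => K /vol_card2_real.
Qed.

Lemma equal_pair_minors_vol Phi : equal_pair_minors Phi <->
  (forall K L, #|K| == 2%N -> #|L| == 2%N -> vol Phi K = vol Phi L).
Proof.
split=> [hX K L /cards2P[i [j [ij ->]]] /cards2P[k [l [kl ->]]]|hvol i j k l ij kl].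
  by rewrite /gvol !det_gram_pair // (hX i j k l).
rewrite -!det_gram_pair // -!vol_card2K ?cards2 ?ij ?kl //.
by rewrite (hvol _ [set k; l]) // cards2 ?ij ?kl.
Qed.

Lemma gV2_eq_bound Phi : gparseval adj Phi ->
  gV adj sq 2 Phi ^+ 2 *+ 2 = N%:R * (N%:R - 1) *+ 'C(M, 2) <-> equal_pair_minors Phi.
Proof.
move=> hP; have := gV2_identity hP.
rewrite equal_pair_minors_vol -(double_sum_sqrB_eq0 (vol_card2_real Phi)).
move=> identity; split=> [max|D0]; last by rewrite D0 add0r in identity.
by apply: (addIr (gV adj sq 2 Phi ^+ 2 *+ 2)); rewrite add0r identity max.
Qed.

Lemma gV2_leE Phi Psi :
  (gV adj sq 2 Psi <= gV adj sq 2 Phi) =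
  (gV adj sq 2 Psi ^+ 2 *+ 2 <= gV adj sq 2 Phi ^+ 2 *+ 2).
Proof. by rewrite lerMn2r /= (ler_sqr : {in Num.nneg &, _}) ?nnegrE ?gV2_ge0. Qed.

Theorem parseval_max_gV2_equiangular : (2 <= N)%N -> cor11_stmt adj sq M N.
Proof.
move=> N2 [Psi [PsiP Psi_eq]] Phi PhiP.
have Psi_max := (gV2_eq_bound PsiP).2 (equiangular_equal_pair_minors Psi_eq).
split=> [Phi_max | Phi_eq Psi' Psi'P].
  apply: (equal_pair_minors_equiangular N2 PhiP); apply/(gV2_eq_bound PhiP).
  by apply/eqP; rewrite eq_le gV2_le //= -Psi_max -gV2_leE Phi_max.
rewrite gV2_leE ((gV2_eq_bound PhiP).2 (equiangular_equal_pair_minors Phi_eq)).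
exact: gV2_le.
Qed.

End ParsevalGram.

Theorem corollary11 (R : realType) (M N : nat) (hN : (2 <= N)%N) :
  cor11_stmt (@radj R) (@rsqrt R) M N /\
  cor11_stmt (@cadj R) (@csqrt R) M N.
Proof.
split.
- apply: (@parseval_max_gV2_equiangular R idfun) => //.
  + by move=> x; rewrite real_normK ?num_real // expr2.
  + by move=> m n A; apply/matrixP => i j; rewrite !mxE.
  + by move=> x _; apply: sqrtr_ge0.
  + by move=> x; apply: sqr_sqrtr.
- apply: (@parseval_max_gV2_equiangular R[i] Num.conj) => //.
  + exact: conjCK.
  + by move=> x; rewrite normCK.
  + by move=> x; rewrite /csqrt sqrtC_ge0.
  + by move=> x _; apply: sqrtCK.
Qed.
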